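(* Let $(Z,Z_{ac})$ be an accretive matrix-ordered vector space and let $V=\operatorname{span}_{\mathbb{C}}Z_{sa}^1$. Then for each $n$: (i) $\operatorname{span}_{\mathbb{C}}Z_{sa}^n=M_n(V)$, and there exists a unique conjugate-linear involution $*$ on $M_n(V)$ such that $z^*=z$ for every $z\in Z_{sa}^n$; (ii) if $z=[z_{kl}]\in M_n(V)$ then $z^*=[z_{lk}^*]$ (the transpose of the entrywise adjoint, with $*$ on $V=M_1(V)$ from (i)); (iii) for $z\in M_n(V)$, $z\in Z_{ac}^n$ if and only if $\operatorname{Re}(z):=\frac12(z+z^* )\in Z_+^n$; (iv) each $Z_+^n$ is proper, i.e. $Z_+^n\cap-Z_+^n=\{0\}$.
   Context: For a complex vector space $Z$, $M_n(Z)$ is the $n\times n$ matrices over $Z$. A cone is a set $C$ with $C+C\subseteq C$, $tC\subseteq C$ ($t\ge0$); a matrix cone is a sequence of cones $C_n\subseteq M_n(Z)$ with $X^*C_nX\subseteq C_k$ for all scalar $X\in M_{n,k}$; it is $\mathbb{C}$-proper if $C_1\cap-C_1\cap iC_1\cap-iC_1=\{0\}$, and then $(Z,Z_{ac})$, $Z_{ac}=\{Z_{ac}^n\}$, is an accretive matrix-ordered vector space. Set $Z_{sa}^n=iZ_{ac}^n\cap-iZ_{ac}^n$ and $Z_+^n=Z_{sa}^n\cap Z_{ac}^n$. *)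

From HB Require Import structures.
From mathcomp Require Import all_boot all_order all_algebra.
Set Implicit Arguments. Unset Strict Implicit. Unset Printing Implicit Defensive.
Import Order.TTheory GRing.Theory Num.Theory.
Local Open Scope ring_scope.

Section Defs.
Variables (K : numClosedFieldType) (Z : lmodType K).

Definition mscale m n (a : K) (z : 'M[Z]_(m, n)) : 'M[Z]_(m, n) := map_mx ( *:%R a) z.

Definition scset n (a : K) (S : 'M[Z]_n -> Prop) : 'M[Z]_n -> Prop :=
  fun z => exists w, S w /\ z = mscale a w.

Definition is_cone n (S : 'M[Z]_n -> Prop) : Prop :=
  (forall x y, S x -> S y -> S (x + y)) /\
  (forall (t : K) x, 0 <= t -> S x -> S (mscale t x)).

(* X^* z X for a scalar matrix X in M_{n,k} and z in M_n(Z) *)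
Definition cmul n k (X : 'M[K]_(n, k)) (z : 'M[Z]_n) : 'M[Z]_k :=
  \matrix_(i < k, j < k) \sum_(p < n) \sum_(q < n) (((X p i)^* * X q j) *: z p q).

Definition is_matrix_cone (C : forall n, 'M[Z]_n -> Prop) : Prop :=
  (forall n, (0 < n)%N -> is_cone (C n)) /\
  (forall n k (X : 'M[K]_(n, k)) z, (0 < n)%N -> (0 < k)%N ->
     C n z -> C k (cmul X z)).

Definition C_proper (C : forall n, 'M[Z]_n -> Prop) : Prop :=
  forall z, C 1%N z -> scset (-1) (C 1%N) z -> scset 'i (C 1%N) z ->
            scset (- 'i) (C 1%N) z -> z = 0.

Definition accretive_mos (Zac : forall n, 'M[Z]_n -> Prop) : Prop :=
  is_matrix_cone Zac /\ C_proper Zac.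

Definition Zsa (Zac : forall n, 'M[Z]_n -> Prop) n : 'M[Z]_n -> Prop :=
  fun z => scset 'i (Zac n) z /\ scset (- 'i) (Zac n) z.

Definition Zplus (Zac : forall n, 'M[Z]_n -> Prop) n : 'M[Z]_n -> Prop :=
  fun z => Zsa Zac z /\ Zac n z.

Definition cspan n (S : 'M[Z]_n -> Prop) : 'M[Z]_n -> Prop :=
  fun z => exists s : seq (K * 'M[Z]_n),
    (forall p, p \in s -> S p.2) /\ z = \sum_(p <- s) mscale p.1 p.2.

(* V = span Z_sa^1, viewed inside Z = M_1(Z) *)
Definition Vsp (Zac : forall n, 'M[Z]_n -> Prop) : Z -> Prop :=
  fun v => cspan (Zsa Zac (n := 1%N)) (const_mx v).

Definition MnV (Zac : forall n, 'M[Z]_n -> Prop) n : 'M[Z]_n -> Prop :=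
  fun z => forall i j, Vsp Zac (z i j).

Definition is_star (Zac : forall n, 'M[Z]_n -> Prop) n (f : 'M[Z]_n -> 'M[Z]_n) : Prop :=
  [/\ (forall z, MnV Zac z -> MnV Zac (f z)),
      (forall (a : K) z w, MnV Zac z -> MnV Zac w -> f (mscale a z + w) = mscale a^* (f z) + f w),
      (forall z, MnV Zac z -> f (f z) = z)
    & (forall z, Zsa Zac z -> f z = z)].

Definition vadj (g : 'M[Z]_1 -> 'M[Z]_1) (v : Z) : Z := g (const_mx v) ord0 ord0.

Definition mxRe n (f : 'M[Z]_n -> 'M[Z]_n) (z : 'M[Z]_n) : 'M[Z]_n :=
  mscale 2^-1 (z + f z).

End Defs.

From HB Require Import structures.
From mathcomp Require Import all_boot all_order all_algebra.
From mathcomp Require Import ring.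
From Stdlib Require Import ClassicalEpsilon.
Import Order.TTheory GRing.Theory Num.Theory.
Local Open Scope ring_scope.
Set Implicit Arguments. Unset Strict Implicit.

(* Compressing z in M_n(Z) by the column e_k + c e_l gives
   z_kk + c z_kl + c^* z_lk + |c|^2 z_ll, and averaging over c in {1, -1, i, -i}
   with weights c^*/4 isolates z_kl.  Compressions preserve Z_sa, so the entries
   of elements of Z_sa^n lie in V; dually, compressing v in Z_sa^1 by the rows
   e_k + c e_l and averaging yields v placed at (k, l), so Z_sa^n spans M_n(V).
   The same polarization carries C-properness from level 1 to level n, which
   makes the Cartesian decomposition z = x + i y with x, y in Z_sa^n + {0}
   unique.  The star is x + i y |-> x - i y: every conjugate-linear map fixing
   Z_sa^n agrees with it, in particular the transposed entrywise adjoint, and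
   (iii), (iv) are read off the decomposition. *)

Section MatrixScaling.
Variables (K : numClosedFieldType) (Z : lmodType K).

Lemma mscaleE m n a (z : 'M[Z]_(m, n)) i j : mscale a z i j = a *: z i j.
Proof. by rewrite mxE. Qed.

Lemma mscalerDr m n a (x y : 'M[Z]_(m, n)) :
  mscale a (x + y) = mscale a x + mscale a y.
Proof. by apply/matrixP=> i j; rewrite !mxE scalerDr. Qed.

Lemma mscalerDl m n a b (x : 'M[Z]_(m, n)) :
  mscale (a + b) x = mscale a x + mscale b x.
Proof. by apply/matrixP=> i j; rewrite !mxE scalerDl. Qed.

Lemma mscalerA m n a b (x : 'M[Z]_(m, n)) :
  mscale a (mscale b x) = mscale (a * b) x.
Proof. by apply/matrixP=> i j; rewrite !mxE scalerA. Qed.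

Lemma mscale1r m n (x : 'M[Z]_(m, n)) : mscale 1 x = x.
Proof. by apply/matrixP=> i j; rewrite !mxE scale1r. Qed.

Lemma mscale0r m n (x : 'M[Z]_(m, n)) : mscale 0 x = 0.
Proof. by apply/matrixP=> i j; rewrite !mxE scale0r. Qed.

Lemma mscaler0 m n a : mscale a (0 : 'M[Z]_(m, n)) = 0.
Proof. by apply/matrixP=> i j; rewrite !mxE scaler0. Qed.

Lemma mscaleN1r m n (x : 'M[Z]_(m, n)) : mscale (-1) x = - x.
Proof. by apply/matrixP=> i j; rewrite !mxE scaleN1r. Qed.

Lemma mscalerN m n a (x : 'M[Z]_(m, n)) : mscale a (- x) = - mscale a x.
Proof. by apply/matrixP=> i j; rewrite !mxE scalerN. Qed.

Lemma mscaleNr m n a (x : 'M[Z]_(m, n)) : mscale (- a) x = - mscale a x.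
Proof. by apply/matrixP=> i j; rewrite !mxE scaleNr. Qed.

Lemma mscale_cartesianD m n (x y x' y' : 'M[Z]_(m, n)) :
  (x + mscale 'i y) + (x' + mscale 'i y') = (x + x') + mscale 'i (y + y').
Proof. by rewrite mscalerDr addrACA. Qed.

Lemma mscale_cartesian m n a b (x y : 'M[Z]_(m, n)) :
  mscale (a + 'i * b) (x + mscale 'i y) =
  (mscale a x - mscale b y) + mscale 'i (mscale a y + mscale b x).
Proof.
rewrite mscalerDl !mscalerDr !mscalerA (mulrC a) [_ * b * _]mulrAC mulCii mulN1r.
by rewrite mscaleNr [mscale ('i * b) x + _]addrC addrACA.
Qed.

Lemma scset_inv n a b (S : 'M[Z]_n -> Prop) z :
  a * b = 1 -> scset a S z <-> S (mscale b z).
Proof.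
move=> ab; split; first by case=> w [Sw ->]; rewrite mscalerA mulrC ab mscale1r.
by move=> Sz; exists (mscale b z); rewrite mscalerA ab mscale1r.
Qed.

Lemma cspan0 n (S : 'M[Z]_n -> Prop) : cspan S 0.
Proof. by exists [::]; rewrite big_nil. Qed.

Lemma cspanD n (S : 'M[Z]_n -> Prop) x y :
  cspan S x -> cspan S y -> cspan S (x + y).
Proof.
move=> [s [hs ->]] [t [ht ->]]; exists (s ++ t); split; last by rewrite big_cat.
by move=> p; rewrite mem_cat => /orP[h|h]; [exact: hs h|exact: ht h].
Qed.

Lemma cspanZ n (S : 'M[Z]_n -> Prop) a x : cspan S x -> cspan S (mscale a x).
Proof.
move=> [s [hs ->]]; exists [seq (a * p.1, p.2) | p <- s]; split.
  by move=> p /mapP[q qs ->]; exact: (hs q).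
elim: s {hs} => [|p s IH]; first by rewrite !big_nil mscaler0.
by rewrite !big_cons mscalerDr IH mscalerA.
Qed.

Lemma mem_cspan n (S : 'M[Z]_n -> Prop) x : S x -> cspan S x.
Proof.
by move=> Sx; exists [:: (1, x)]; rewrite big_seq1 mscale1r; split=> // p /[1!inE] /eqP->.
Qed.

Lemma cspan_sum n (S : 'M[Z]_n -> Prop) I (r : seq I) (F : I -> 'M[Z]_n) :
  (forall i, cspan S (F i)) -> cspan S (\sum_(i <- r) F i).
Proof. by move=> h; apply: big_ind => //; [apply: cspan0|apply: cspanD]. Qed.

Lemma cspan_min n (S P : 'M[Z]_n -> Prop) :
  P 0 -> (forall x y, P x -> P y -> P (x + y)) -> (forall a x, P x -> P (mscale a x)) ->
  (forall x, S x -> P x) -> forall x, cspan S x -> P x.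
Proof.
move=> P0 PD PZ SP _ [s [hs ->]]; elim: s hs => [|p s IH] hs; first by rewrite big_nil.
rewrite big_cons; apply: PD; first by apply/PZ/SP/hs; rewrite mem_head.
by apply: IH => q qs; apply: hs; rewrite inE qs orbT.
Qed.

End MatrixScaling.

Section Polarization.
Variables (K : numClosedFieldType) (Z : lmodType K).

Definition roots4 : seq K := [:: 1; -1; 'i; - 'i].

Definition polar_form (A B C D : Z) (c : K) : Z :=
  A + c *: B + c^* *: C + (c^* * c) *: D.

Lemma polar_form_sum (w : K -> K) A B C D :
  \sum_(c <- roots4) w c *: polar_form A B C D c =
  (\sum_(c <- roots4) w c) *: A + (\sum_(c <- roots4) w c * c) *: B
  + (\sum_(c <- roots4) w c * c^*) *: C + (\sum_(c <- roots4) w c * (c^* * c)) *: D.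
Proof.
under eq_bigr => c _ do rewrite /polar_form !scalerDr !scalerA.
by rewrite !big_split /= -!scaler_suml.
Qed.

Lemma conjCNi : (- 'i)^* = 'i :> K.
Proof. by rewrite -conjCi conjCK. Qed.

Ltac sum_roots4 :=
  rewrite /roots4 !big_cons big_nil /= ?conjC1 ?conjCN1 ?conjCi ?conjCNi.

Lemma polarization_l A B C D :
  \sum_(c <- roots4) (c^* / 4) *: polar_form A B C D c = B.
Proof.
have ii := @mulCii K; have h4 : (4 : K) != 0 by rewrite pnatr_eq0.
rewrite polar_form_sum.
have -> : \sum_(c <- roots4) c^* / 4 = 0 :> K by sum_roots4; field.
have -> : \sum_(c <- roots4) c^* / 4 * c = 1 :> K by sum_roots4; field: ii.
have -> : \sum_(c <- roots4) c^* / 4 * c^* = 0 :> K by sum_roots4; field: ii.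
have -> : \sum_(c <- roots4) c^* / 4 * (c^* * c) = 0 :> K by sum_roots4; field: ii.
by rewrite !scale0r scale1r !add0r !addr0.
Qed.

Lemma polarization_r A B C D :
  \sum_(c <- roots4) (c / 4) *: polar_form A B C D c = C.
Proof.
have ii := @mulCii K; have h4 : (4 : K) != 0 by rewrite pnatr_eq0.
rewrite polar_form_sum.
have -> : \sum_(c <- roots4) c / 4 = 0 :> K by sum_roots4; field.
have -> : \sum_(c <- roots4) c / 4 * c = 0 :> K by sum_roots4; field: ii.
have -> : \sum_(c <- roots4) c / 4 * c^* = 1 :> K by sum_roots4; field: ii.
have -> : \sum_(c <- roots4) c / 4 * (c^* * c) = 0 :> K by sum_roots4; field: ii.
by rewrite !scale0r scale1r !add0r !addr0.
Qed.

End Polarization.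

Section Compression.
Variables (K : numClosedFieldType) (Z : lmodType K).

Definition ekl_col n (k l : 'I_n) (c : K) : 'M[K]_(n, 1) :=
  \matrix_(p, j) ((p == k)%:R + c * (p == l)%:R).

Definition ekl_row n (k l : 'I_n) (c : K) : 'M[K]_(1, n) :=
  \matrix_(j, p) ((p == k)%:R + c * (p == l)%:R).

Definition single_mx n (k l : 'I_n) (v : Z) : 'M[Z]_n :=
  \matrix_(i, j) (((i == k)%:R * (j == l)%:R : K) *: v).

Lemma single_mx0 n (k l : 'I_n) : single_mx k l 0 = 0.
Proof. by apply/matrixP=> i j; rewrite !mxE scaler0. Qed.

Lemma single_mxD n (k l : 'I_n) u v :
  single_mx k l (u + v) = single_mx k l u + single_mx k l v.
Proof. by apply/matrixP=> i j; rewrite !mxE scalerDr. Qed.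

Lemma single_mxZ n (k l : 'I_n) a u :
  single_mx k l (a *: u) = mscale a (single_mx k l u).
Proof. by apply/matrixP=> i j; rewrite !mxE !scalerA mulrC. Qed.

Lemma sum_delta2 n (F : 'I_n -> 'I_n -> Z) u v (a : K) :
  \sum_p \sum_q (((p == u)%:R * (q == v)%:R) * a) *: F p q = a *: F u v.
Proof.
rewrite (bigD1 u) //= [X in _ + X]big1 ?addr0; last first.
  by move=> p /negbTE pu; apply: big1 => q _; rewrite pu !mul0r scale0r.
rewrite (bigD1 v) //= [X in _ + X]big1 ?addr0 ?eqxx ?mul1r //.
by move=> q /negbTE qv; rewrite qv mulr0 mul0r scale0r.
Qed.

Lemma mx_single_sum n (z : 'M[Z]_n) : z = \sum_k \sum_l single_mx k l (z k l).
Proof.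
apply/matrixP => i j; rewrite summxE.
under eq_bigr do rewrite summxE.
under eq_bigr do under eq_bigr do rewrite mxE (eq_sym i) (eq_sym j) -[_ * _]mulr1.
by rewrite sum_delta2 scale1r.
Qed.

Lemma cmulZ n k (X : 'M[K]_(n, k)) a (z : 'M[Z]_n) :
  cmul X (mscale a z) = mscale a (cmul X z).
Proof.
apply/matrixP => i j; rewrite !mxE scaler_sumr; apply: eq_bigr => p _.
by rewrite scaler_sumr; apply: eq_bigr => q _; rewrite mxE !scalerA mulrC.
Qed.

Lemma cmul_ekl_col n (z : 'M[Z]_n) k l c i j :
  cmul (ekl_col k l c) z i j = polar_form (z k k) (z k l) (z l k) (z l l) c.
Proof.
rewrite mxE /polar_form.
transitivity (\sum_(p < n) \sum_(q < n)
   ((((p == k)%:R * (q == k)%:R) * 1) *: z p q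
   + (((p == k)%:R * (q == l)%:R) * c) *: z p q
   + (((p == l)%:R * (q == k)%:R) * c^*) *: z p q
   + (((p == l)%:R * (q == l)%:R) * (c^* * c)) *: z p q)).
  apply: eq_bigr => p _; apply: eq_bigr => q _; rewrite !mxE -!scalerDl.
  by congr (_ *: _); rewrite rmorphD rmorphM !rmorph_nat; ring.
under eq_bigr do rewrite !big_split /=.
by rewrite !big_split /= !sum_delta2 scale1r.
Qed.

Lemma cmul_ekl_row n (w : 'M[Z]_1) (k l : 'I_n) c i j :
  cmul (ekl_row k l c) w i j =
  polar_form (single_mx k k (w 0 0) i j) (single_mx k l (w 0 0) i j)
             (single_mx l k (w 0 0) i j) (single_mx l l (w 0 0) i j) c.
Proof.
rewrite /polar_form !mxE !big_ord1 !mxE !scalerA -!scalerDl.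
by congr (_ *: _); rewrite rmorphD rmorphM !rmorph_nat; ring.
Qed.

Lemma entry_polarization n (z : 'M[Z]_n) k l :
  const_mx (z k l) = \sum_(c <- roots4 K) mscale (c^* / 4) (cmul (ekl_col k l c) z) :> 'M_1.
Proof.
apply/matrixP => i j; rewrite mxE summxE.
by under eq_bigr do rewrite mscaleE cmul_ekl_col; rewrite polarization_l.
Qed.

Lemma single_mx_polarization n (w : 'M[Z]_1) (k l : 'I_n) :
  single_mx k l (w 0 0) = \sum_(c <- roots4 K) mscale (c^* / 4) (cmul (ekl_row k l c) w).
Proof.
apply/matrixP => i j; rewrite summxE.
by under eq_bigr do rewrite mscaleE cmul_ekl_row; rewrite polarization_l.
Qed.

End Compression.

Lemma mulCiNi (K : numClosedFieldType) : ('i : K) * - 'i = 1.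
Proof. by rewrite mulrN mulCii opprK. Qed.

Lemma mulCNii (K : numClosedFieldType) : (- 'i : K) * 'i = 1.
Proof. by rewrite mulNr mulCii opprK. Qed.

Section AccretiveSpace.
Variables (K : numClosedFieldType) (Z : lmodType K).
Unset Implicit Arguments.
Variables (Zac : forall n, 'M[Z]_n -> Prop) (hZ : accretive_mos Zac).
Set Implicit Arguments.

Lemma Zac_add n x y : (0 < n)%N -> Zac n x -> Zac n y -> Zac n (x + y).
Proof. by move=> n_gt0; case: hZ => [[/(_ n n_gt0)[+ _] _] _]; apply. Qed.

Lemma Zac_scale n t x : (0 < n)%N -> 0 <= t -> Zac n x -> Zac n (mscale t x).
Proof. by move=> n_gt0; case: hZ => [[/(_ n n_gt0)[_ +] _] _]; apply. Qed.

Lemma Zac_cmul n k (X : 'M[K]_(n, k)) z :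
  (0 < n)%N -> (0 < k)%N -> Zac n z -> Zac k (cmul X z).
Proof. by case: hZ => [[_ +] _]; apply. Qed.

Lemma ZsaE n (z : 'M[Z]_n) :
  Zsa Zac z <-> Zac n (mscale (- 'i) z) /\ Zac n (mscale 'i z).
Proof. by rewrite /Zsa (scset_inv _ _ (@mulCiNi K)) (scset_inv _ _ (@mulCNii K)). Qed.

Lemma Zac_proper n (z : 'M[Z]_n) : (0 < n)%N -> Zac n z -> Zac n (- z) ->
  Zac n (mscale (- 'i) z) -> Zac n (mscale 'i z) -> z = 0.
Proof.
move=> n_gt0 Zz ZNz ZNiz Ziz.
have compression0 (X : 'M[K]_(n, 1)) : cmul X z = 0.
  case: hZ => _; apply; first exact: Zac_cmul.
  - apply/(scset_inv _ _ (b := -1)); first by rewrite mulrNN mulr1.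
    by rewrite -cmulZ mscaleN1r; apply: Zac_cmul.
  - by apply/(scset_inv _ _ (@mulCiNi K)); rewrite -cmulZ; apply: Zac_cmul.
  - by apply/(scset_inv _ _ (@mulCNii K)); rewrite -cmulZ; apply: Zac_cmul.
apply/matrixP => k l; have := entry_polarization z k l.
under eq_bigr do rewrite compression0 mscaler0.
by rewrite big1_eq => /matrixP/(_ ord0 ord0); rewrite !mxE.
Qed.

Lemma Zsa_add n (x y : 'M[Z]_n) :
  (0 < n)%N -> Zsa Zac x -> Zsa Zac y -> Zsa Zac (x + y).
Proof.
move=> n_gt0 /ZsaE[x1 x2] /ZsaE[y1 y2]; apply/ZsaE.
by rewrite !mscalerDr; split; apply: Zac_add.
Qed.

Lemma Zsa_scale n t (x : 'M[Z]_n) :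
  (0 < n)%N -> 0 <= t -> Zsa Zac x -> Zsa Zac (mscale t x).
Proof.
move=> n_gt0 t_ge0 /ZsaE[x1 x2]; apply/ZsaE.
by rewrite !mscalerA ![_ * t]mulrC -!mscalerA; split; apply: Zac_scale.
Qed.

Lemma Zsa_opp n (x : 'M[Z]_n) : Zsa Zac x -> Zsa Zac (- x).
Proof. by move=> /ZsaE[x1 x2]; apply/ZsaE; rewrite !mscalerN -!mscaleNr opprK. Qed.

Lemma Zsa_cmul n k (X : 'M[K]_(n, k)) (z : 'M[Z]_n) :
  (0 < n)%N -> (0 < k)%N -> Zsa Zac z -> Zsa Zac (cmul X z).
Proof.
move=> n_gt0 k_gt0 /ZsaE[z1 z2]; apply/ZsaE.
by rewrite -!cmulZ; split; apply: Zac_cmul.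
Qed.

(* Cones need not contain 0, so Z_sa^n may miss it; the real and imaginary
   parts of an element of M_n(V) are taken in Z_sa^n together with 0. *)
Definition Zsa0 n (x : 'M[Z]_n) : Prop := x = 0 \/ Zsa Zac x.

Lemma const_mx1D (u v : Z) : const_mx (u + v) = const_mx u + const_mx v :> 'M_1.
Proof. by apply/matrixP => i j; rewrite !mxE. Qed.

Lemma const_mx1Z a (u : Z) : const_mx (a *: u) = mscale a (const_mx u) :> 'M_1.
Proof. by apply/matrixP => i j; rewrite !mxE. Qed.

Lemma MnV0 n : MnV Zac (0 : 'M[Z]_n).
Proof.
move=> i j; rewrite mxE /Vsp.
have -> : const_mx 0 = 0 :> 'M[Z]_1 by apply/matrixP => ? ?; rewrite !mxE.
exact: cspan0.
Qed.

Lemma MnVD n (x y : 'M[Z]_n) : MnV Zac x -> MnV Zac y -> MnV Zac (x + y).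
Proof.
by move=> hx hy i j; rewrite mxE /Vsp const_mx1D; apply: cspanD; [exact: hx|exact: hy].
Qed.

Lemma MnVZ n a (x : 'M[Z]_n) : MnV Zac x -> MnV Zac (mscale a x).
Proof. by move=> hx i j; rewrite mxE /Vsp const_mx1Z; apply: cspanZ; exact: hx. Qed.

Lemma MnV_sum n I (r : seq I) (F : I -> 'M[Z]_n) :
  (forall i, MnV Zac (F i)) -> MnV Zac (\sum_(i <- r) F i).
Proof. by move=> h; apply: big_ind => //; [apply: MnV0|apply: MnVD]. Qed.

Lemma Zsa_MnV n (z : 'M[Z]_n) : (0 < n)%N -> Zsa Zac z -> MnV Zac z.
Proof.
move=> n_gt0 hz k l; rewrite /Vsp entry_polarization.
by apply: cspan_sum => c; apply/cspanZ/mem_cspan; apply: Zsa_cmul.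
Qed.

Lemma star0 n (f : 'M[Z]_n -> 'M[Z]_n) : is_star Zac f -> f 0 = 0.
Proof.
case=> _ f_lin _ _; have := f_lin (-1) 0 0 (@MnV0 n) (@MnV0 n).
by rewrite mscaler0 addr0 conjCN1 mscaleN1r addNr.
Qed.

Lemma star_Zsa0 n (f : 'M[Z]_n -> 'M[Z]_n) x : is_star Zac f -> Zsa0 x -> f x = x.
Proof. by move=> f_star [->|]; [apply: star0|case: f_star => _ _ _; apply]. Qed.

Lemma star_sum n (f : 'M[Z]_n -> 'M[Z]_n) I (r : seq I) (a : I -> K) (u : I -> 'M[Z]_n) :
  is_star Zac f -> (forall i, MnV Zac (u i)) ->
  f (\sum_(i <- r) mscale (a i) (u i)) = \sum_(i <- r) mscale (a i)^* (f (u i)).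
Proof.
move=> f_star hu; have [_ f_lin _ _] := f_star.
elim: r => [|i r IH]; first by rewrite !big_nil (star0 f_star).
rewrite !big_cons f_lin ?IH //; apply: MnV_sum => j; exact: MnVZ.
Qed.

Definition transpose_star n (g : 'M[Z]_1 -> 'M[Z]_1) (z : 'M[Z]_n) : 'M[Z]_n :=
  \matrix_(k, l) vadj g (z l k).

Lemma transpose_star_is_star n (g : 'M[Z]_1 -> 'M[Z]_1) :
  (0 < n)%N -> is_star Zac g -> is_star Zac (transpose_star (n := n) g).
Proof.
move=> n_gt0 g_star; have [g_MnV g_lin g_inv g_fix] := g_star.
have MnV_const v : Vsp Zac v -> MnV Zac (const_mx v : 'M[Z]_1) by move=> hv i j; rewrite mxE.
split.
- by move=> z hz k l; rewrite mxE; apply: (g_MnV _ (MnV_const _ (hz l k))).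
- move=> a z w hz hw; apply/matrixP => k l; rewrite !mxE /vadj const_mx1D const_mx1Z.
  by rewrite g_lin ?mxE //; apply: MnV_const.
- move=> z hz; apply/matrixP => k l; rewrite !mxE /vadj.
  have -> : const_mx (g (const_mx (z k l)) 0 0) = g (const_mx (z k l)).
    by apply/matrixP => i j; rewrite mxE !ord1.
  by rewrite g_inv ?mxE //; apply: MnV_const.
- move=> z hz; apply/matrixP => k l; rewrite mxE /vadj.
  have Zsa_c c : Zsa Zac (cmul (ekl_col l k c) z) by apply: Zsa_cmul.
  rewrite entry_polarization (star_sum _ _ g_star); last first.
    by move=> c; apply: Zsa_MnV.
  under eq_bigr => c _ do rewrite (star_Zsa0 g_star (or_intror (Zsa_c c))).
  rewrite summxE; under eq_bigr => c _ do rewrite mscaleE cmul_ekl_col.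
  have conj_c4 c : (c^* / 4)^* = c / 4 :> K.
    by rewrite fmorph_div; change (c^*^* / (4 : K)^* = c / 4); rewrite conjCK conjC_nat.
  by under eq_bigr => c _ do rewrite conj_c4; rewrite polarization_r.
Qed.

Section Level.
Variable n : nat.
Hypothesis n_gt0 : (0 < n)%N.
Implicit Types x y z w : 'M[Z]_n.

Lemma Zsa0D x y : Zsa0 x -> Zsa0 y -> Zsa0 (x + y).
Proof.
move=> [->|hx] [->|hy]; rewrite ?add0r ?addr0; [by left|by right|by right|].
by right; apply: Zsa_add.
Qed.

Lemma Zsa0N x : Zsa0 x -> Zsa0 (- x).
Proof. by move=> [->|hx]; [left; rewrite oppr0|right; apply: Zsa_opp]. Qed.

Lemma Zsa0_real t x : t \is Num.real -> Zsa0 x -> Zsa0 (mscale t x).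
Proof.
move=> t_real [->|hx]; first by left; rewrite mscaler0.
right; have [t_ge0|t_le0] := real_ge0P t_real; first exact: Zsa_scale.
rewrite -[mscale t x]opprK -mscalerN -mscaleNr.
by apply: Zsa_scale n_gt0 _ (Zsa_opp hx); rewrite oppr_ge0 ltW.
Qed.

Lemma Zsa0_MnV x : Zsa0 x -> MnV Zac x.
Proof. by move=> [->|hx]; [apply: MnV0|apply: Zsa_MnV]. Qed.

Lemma cspan_MnV z : cspan (Zsa Zac (n := n)) z -> MnV Zac z.
Proof.
apply: cspan_min => [|x y|a x|x hx]; [exact: MnV0|exact: MnVD|exact: MnVZ|].
exact: Zsa_MnV.
Qed.

Lemma MnV_cspan z : MnV Zac z -> cspan (Zsa Zac (n := n)) z.
Proof.
move=> hz; rewrite (mx_single_sum z); apply: cspan_sum => k; apply: cspan_sum => l.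
pose P (w : 'M[Z]_1) := cspan (Zsa Zac (n := n)) (single_mx k l (w 0 0)).
suff : P (const_mx (z k l)) by rewrite /P mxE.
apply: (cspan_min (P := P)) (hz k l); rewrite /P.
- by rewrite mxE single_mx0; apply: cspan0.
- by move=> x y; rewrite mxE single_mxD; apply: cspanD.
- by move=> a x; rewrite mxE single_mxZ; apply: cspanZ.
- move=> w hw; rewrite single_mx_polarization.
  by apply: cspan_sum => c; apply/cspanZ/mem_cspan; apply: Zsa_cmul.
Qed.

Definition cartesian z : Prop :=
  exists x y, [/\ Zsa0 x, Zsa0 y & z = x + mscale 'i y].

Lemma cartesian_span z : cspan (Zsa Zac (n := n)) z -> cartesian z.
Proof.
apply: cspan_min => [|_ _ [x [y [Rx Ry ->]]] [x' [y' [Rx' Ry' ->]]]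
                    |a _ [x [y [Rx Ry ->]]]|x hx].
- by exists 0, 0; split; [left|left|rewrite mscaler0 addr0].
- by exists (x + x'), (y + y'); rewrite mscale_cartesianD; split=> //; apply: Zsa0D.
- rewrite (Crect a) mscale_cartesian.
  have [Re_real Im_real] := (Creal_Re a, Creal_Im a).
  exists (mscale ('Re a) x - mscale ('Im a) y), (mscale ('Re a) y + mscale ('Im a) x).
  by split=> //; apply: Zsa0D; try apply: Zsa0N; exact: Zsa0_real.
- by exists x, 0; split; [right|left|rewrite mscaler0 addr0].
Qed.

Lemma MnV_cartesian z : MnV Zac z -> cartesian z.
Proof. by move=> hz; apply/cartesian_span/MnV_cspan. Qed.

Lemma Zsa0_imag_eq0 x y : Zsa0 x -> Zsa0 y -> x = mscale 'i y -> y = 0.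
Proof.
move=> Rx [->//|hy] xE; have [y1 y2] := (ZsaE y).1 hy.
case: Rx => [x0|hx].
  by rewrite -[y]mscale1r -(@mulCNii K) -mscalerA -xE x0 mscaler0.
have [] := (ZsaE x).1 hx; rewrite xE !mscalerA mulCNii mulCii mscale1r mscaleN1r.
by move=> ZNy Zy; apply: Zac_proper.
Qed.

Lemma cartesian_uniq x y x' y' : Zsa0 x -> Zsa0 y -> Zsa0 x' -> Zsa0 y' ->
  x + mscale 'i y = x' + mscale 'i y' -> x = x' /\ y = y'.
Proof.
move=> Rx Ry Rx' Ry' e.
have dxE : x - x' = mscale 'i (y' - y).
  rewrite mscalerDr mscalerN -(addrK (mscale 'i y) x) e.
  by rewrite addrAC [x' + _ - x']addrAC subrr add0r.
have dy0 := Zsa0_imag_eq0 (Zsa0D Rx (Zsa0N Rx')) (Zsa0D Ry' (Zsa0N Ry)) dxE.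
move: dxE; rewrite dy0 mscaler0 => /eqP; rewrite subr_eq0 => /eqP ->.
by split=> //; apply/eqP; rewrite eq_sym -subr_eq0 dy0.
Qed.

Lemma star_cartesian (f : 'M[Z]_n -> 'M[Z]_n) x y : is_star Zac f ->
  Zsa0 x -> Zsa0 y -> f (x + mscale 'i y) = x + mscale (- 'i) y.
Proof.
move=> f_star Rx Ry; have [_ f_lin _ _] := f_star.
rewrite addrC f_lin ?conjCi; try exact: Zsa0_MnV.
by rewrite !(star_Zsa0 f_star) // addrC.
Qed.

Lemma star_uniq (f g : 'M[Z]_n -> 'M[Z]_n) : is_star Zac f -> is_star Zac g ->
  forall z, MnV Zac z -> f z = g z.
Proof.
move=> f_star g_star z /MnV_cartesian[x [y [Rx Ry ->]]].
by rewrite !star_cartesian.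
Qed.

Definition cartesian_parts z : 'M[Z]_n * 'M[Z]_n :=
  epsilon (inhabits (0, 0)) (fun p => [/\ Zsa0 p.1, Zsa0 p.2 & z = p.1 + mscale 'i p.2]).

Definition cartesian_star z : 'M[Z]_n :=
  (cartesian_parts z).1 + mscale (- 'i) (cartesian_parts z).2.

Lemma cartesian_starE x y : Zsa0 x -> Zsa0 y ->
  cartesian_star (x + mscale 'i y) = x + mscale (- 'i) y.
Proof.
move=> Rx Ry; rewrite /cartesian_star /cartesian_parts.
have ex_parts : exists p : 'M[Z]_n * 'M[Z]_n,
    [/\ Zsa0 p.1, Zsa0 p.2 & x + mscale 'i y = p.1 + mscale 'i p.2].
  by exists (x, y).
have [Rx' Ry' /esym] := epsilon_spec (inhabits (0, 0)) _ ex_parts.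
by move=> /(cartesian_uniq Rx' Ry' Rx Ry) [-> ->].
Qed.

Lemma mscaleNCi y : mscale (- 'i) y = mscale 'i (- y).
Proof. by rewrite mscaleNr mscalerN. Qed.

Lemma cartesian_star_is_star : is_star Zac cartesian_star.
Proof.
split.
- move=> _ /MnV_cartesian[x [y [Rx Ry ->]]]; rewrite cartesian_starE //.
  by apply: MnVD; [|apply: MnVZ]; apply: Zsa0_MnV.
- move=> a _ _ /MnV_cartesian[x [y [Rx Ry ->]]] /MnV_cartesian[x' [y' [Rx' Ry' ->]]].
  have [Re_real Im_real] := (Creal_Re a, Creal_Im a).
  have Rcomb (u v : 'M[Z]_n) b c : Zsa0 u -> Zsa0 v -> b \is Num.real -> c \is Num.real ->
      Zsa0 (mscale b u + mscale c v).
    by move=> Ru Rv br cr; apply: Zsa0D; apply: Zsa0_real.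
  rewrite [in LHS](Crect a) [in RHS](Crect a) conjC_rect //.
  rewrite mscale_cartesian mscale_cartesianD cartesian_starE; last 2 first.
  + by apply: Zsa0D => //; rewrite -mscaleNr; apply: Rcomb; rewrite ?realN.
  + by apply: Zsa0D => //; apply: Rcomb.
  rewrite !cartesian_starE // !mscaleNCi -mulrN mscale_cartesian mscale_cartesianD.
  congr (_ - _ + _ + mscale 'i _); first by rewrite mscaleNr mscalerN opprK.
  by rewrite !opprD mscalerN mscaleNr.
- move=> _ /MnV_cartesian[x [y [Rx Ry ->]]].
  rewrite cartesian_starE // mscaleNCi cartesian_starE ?mscaleNr ?mscalerN ?opprK //.
  exact: Zsa0N.
- move=> z hz; have := cartesian_starE (or_intror hz) (or_introl erefl).
  by rewrite !mscaler0 !addr0.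
Qed.

Lemma mxRe_cartesian (f : 'M[Z]_n -> 'M[Z]_n) x y : is_star Zac f ->
  Zsa0 x -> Zsa0 y -> mxRe f (x + mscale 'i y) = x.
Proof.
move=> f_star Rx Ry.
rewrite /mxRe star_cartesian // mscaleNCi mscale_cartesianD subrr mscaler0 addr0.
rewrite -{1 2}[x]mscale1r -mscalerDl mscalerA.
have two_neq0 : (2 : K) != 0 by rewrite pnatr_eq0.
have -> : (2 : K)^-1 * (1 + 1) = 1 by field.
exact: mscale1r.
Qed.

Lemma Zac_iff_mxRe (f : 'M[Z]_n -> 'M[Z]_n) z : is_star Zac f -> MnV Zac z ->
  Zac n z <-> Zplus Zac (mxRe f z).
Proof.
move=> f_star /MnV_cartesian[x [y [Rx Ry ->]]]; rewrite mxRe_cartesian //; split.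
- move=> Zz; split.
  + have Zac0 : Zac n 0 by rewrite -(mscale0r (x + mscale 'i y)); apply: Zac_scale.
    by case: Rx => [->|//]; apply/ZsaE; rewrite !mscaler0.
  + case: Ry => [y0|hy]; first by move: Zz; rewrite y0 mscaler0 addr0.
    have [ZNiy _] := (ZsaE y).1 hy.
    have -> : x = x + mscale 'i y + mscale (- 'i) y.
      by rewrite -addrA -mscalerDl subrr mscale0r addr0.
    exact: Zac_add.
- move=> [_ Zx]; case: Ry => [->|hy]; first by rewrite mscaler0 addr0.
  by have [_ Ziy] := (ZsaE y).1 hy; apply: Zac_add.
Qed.

Lemma Zplus_antisym z : Zplus Zac z -> Zplus Zac (- z) -> z = 0.
Proof.
move=> [/ZsaE[ZNiz Ziz] Zz] [_ ZNz].
exact: Zac_proper.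
Qed.

End Level.

End AccretiveSpace.

Unset Implicit Arguments.

Theorem lemma2p6 (K : numClosedFieldType) (Z : lmodType K)
    (Zac : forall n, 'M[Z]_n -> Prop) (hZ : accretive_mos Zac)
    (n : nat) (hn : (0 < n)%N) :
  (* (i) *)
  (forall z : 'M[Z]_n, cspan (Zsa Zac (n := n)) z <-> MnV Zac z) /\
  (exists f : 'M[Z]_n -> 'M[Z]_n, is_star Zac f) /\
  (forall f g : 'M[Z]_n -> 'M[Z]_n, is_star Zac f -> is_star Zac g ->
     forall z, MnV Zac z -> f z = g z) /\
  (* (ii) *)
  (forall (f : 'M[Z]_n -> 'M[Z]_n) (g : 'M[Z]_1 -> 'M[Z]_1),
     is_star Zac f -> is_star Zac g ->
     forall z, MnV Zac z -> f z = \matrix_(k < n, l < n) vadj g (z l k)) /\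
  (* (iii) *)
  (forall f : 'M[Z]_n -> 'M[Z]_n, is_star Zac f ->
     forall z, MnV Zac z -> (Zac n z <-> Zplus Zac (mxRe f z))) /\
  (* (iv) *)
  (forall z : 'M[Z]_n, Zplus Zac z -> Zplus Zac (- z) -> z = 0).
Proof.
split; first by move=> z; split; [apply: cspan_MnV|apply: MnV_cspan].
split; first by exists (cartesian_star Zac (n := n)); apply: cartesian_star_is_star.
split; first by move=> f g; apply: star_uniq.
split.
  move=> f g f_star g_star z hz.
  exact: (star_uniq hZ hn f_star (transpose_star_is_star hZ hn g_star) hz).
split; first by move=> f f_star z; apply: Zac_iff_mxRe.
by move=> z; apply: Zplus_antisym.
Qed.
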